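(* For an integer $d\ge 2$ and density matrices $\rho,\sigma$ on $\mathbb{C}^d$, let $$\mathcal{F}_C^{(d)}(\rho,\sigma)=\frac{1-r}{2}+\frac{1+r}{2}\left[\operatorname{tr}(\rho\sigma)+\sqrt{1-\operatorname{tr}(\rho^2)}\sqrt{1-\operatorname{tr}(\sigma^2)}\right],\qquad r=\frac{1}{d-1}.$$ Then for all integers $d_1,d_2\ge 2$, all density matrices $\rho_1,\sigma_1$ on $\mathbb{C}^{d_1}$ and $\rho_2,\sigma_2$ on $\mathbb{C}^{d_2}$, $$\mathcal{F}_C^{(d_1d_2)}(\rho_1\otimes\rho_2,\sigma_1\otimes\sigma_2)\ge\mathcal{F}_C^{(d_1)}(\rho_1,\sigma_1)\,\mathcal{F}_C^{(d_2)}(\rho_2,\sigma_2).$$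
   Context: A density matrix is a positive semidefinite matrix of unit trace. $\mathcal{F}_C$ is the fidelity of Chen et al., where $d$ is the dimension of the state space. *)

From HB Require Import structures.
From mathcomp Require Import all_boot all_order all_algebra.
From mathcomp Require Import complex mxtens.
Set Implicit Arguments. Unset Strict Implicit. Unset Printing Implicit Defensive.
Import Order.TTheory GRing.Theory Num.Theory.
Local Open Scope ring_scope.
Local Open Scope complex_scope.

Definition adjmx {C : numClosedFieldType} m n (A : 'M[C]_(m, n)) : 'M[C]_(n, m) :=
  map_mx Num.conj A^T.

Definition psd {C : numClosedFieldType} n (A : 'M[C]_n) : Prop :=
  adjmx A = A /\ forall x : 'cV[C]_n, 0 <= (adjmx x *m A *m x) 0 0.

Definition density {C : numClosedFieldType} n (A : 'M[C]_n) : Prop :=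
  psd A /\ \tr A = 1.

(* The fidelity F_C^{(d)} of Chen et al.; r = 1/(d-1).
   Its value is real for density matrices; it lives in C and is compared
   with the (partial) order of C, which on reals is the usual order. *)
Definition fidC {C : numClosedFieldType} (d : nat) (rho sigma : 'M[C]_d) : C :=
  let r := ((d.-1)%:R)^-1 in
  (1 - r) / 2%:R + (1 + r) / 2%:R *
    (\tr (rho *m sigma)
     + sqrtC (1 - \tr (rho *m rho)) * sqrtC (1 - \tr (sigma *m sigma))).

From HB Require Import structures.
From mathcomp Require Import all_boot all_order all_algebra.
From mathcomp Require Import complex mxtens spectral.
From mathcomp Require Import ring lra.
Set Implicit Arguments. Unset Strict Implicit. Unset Printing Implicit Defensive.
Import Order.TTheory GRing.Theory Num.Theory.
Local Open Scope ring_scope.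

(* F_C^(d) = (1 - w_d) + w_d G is an affine function of the super-fidelity
   G(rho, sigma) = tr(rho sigma) + sqrt(1 - tr rho^2) sqrt(1 - tr sigma^2),
   with weight w_d = (1 + 1/(d-1))/2 in [1/2, 1] and w_(d1 d2) <= w_d1, w_d2.
   Everything depends only on the real traces a = tr(rho sigma), p = tr rho^2,
   q = tr sigma^2, which satisfy a >= 0, p, q in [0, 1] and a^2 <= p q
   (Cauchy-Schwarz for the Hilbert-Schmidt product), and which are
   multiplicative under the tensor product.  On such triples G lies in [0, 1]
   and is supermultiplicative: writing 1 - p1 p2 = p1 (1 - p2) + (1 - p1) p2
   + (1 - p1)(1 - p2) and using a_i <= sqrt (p_i q_i) reduces this to
   Cauchy-Schwarz in R^3.  An elementary inequality on affine combinations
   then absorbs the weights. *)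

Lemma cauchy_schwarz3 (R : realDomainType) (x1 x2 x3 y1 y2 y3 : R) :
  (x1 * y1 + x2 * y2 + x3 * y3) ^+ 2
    <= (x1 ^+ 2 + x2 ^+ 2 + x3 ^+ 2) * (y1 ^+ 2 + y2 ^+ 2 + y3 ^+ 2).
Proof.
rewrite -subr_ge0.
have -> : (x1 ^+ 2 + x2 ^+ 2 + x3 ^+ 2) * (y1 ^+ 2 + y2 ^+ 2 + y3 ^+ 2)
    - (x1 * y1 + x2 * y2 + x3 * y3) ^+ 2
    = (x1 * y2 - x2 * y1) ^+ 2 + (x1 * y3 - x3 * y1) ^+ 2
      + (x2 * y3 - x3 * y2) ^+ 2 by ring.
by rewrite !addr_ge0 ?sqr_ge0.
Qed.

Lemma discriminant_le (R : realFieldType) (a p q : R) :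
  (forall x y : R, 0 <= x ^+ 2 * p + 2 * x * y * a + y ^+ 2 * q) ->
  a ^+ 2 <= p * q.
Proof.
move=> h; have p_ge0 : 0 <= p.
  by have := h 1 0; rewrite !(expr0n, expr1n, mulr0, mul0r, mul1r, addr0).
have [q0|q_neq0] := eqVneq q 0.
  have := h a (- (p + 1)); have := mulr_ge0 p_ge0 (sqr_ge0 a); rewrite q0; nra.
have q_gt0 : 0 < q.
  rewrite lt_def q_neq0 /=.
  by have := h 0 1; rewrite !(expr0n, expr1n, mulr0, mul0r, mul1r, add0r).
have := h q (- a); nra.
Qed.

Lemma mul_affine_le (R : realFieldType) (b b1 b2 g g1 g2 : R) :
  0 <= b -> b <= b1 -> b <= b2 -> b1 <= 1 -> b2 <= 1 ->
  0 <= g1 <= 1 -> 0 <= g2 <= 1 -> g1 * g2 <= g ->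
  ((1 - b1) + b1 * g1) * ((1 - b2) + b2 * g2) <= (1 - b) + b * g.
Proof.
move=> b_ge0 bb1 bb2 b1_le1 b2_le1 /andP[g1_ge0 g1_le1] /andP[g2_ge0 g2_le1] g12.
have h1 : 0 <= (b1 - b) * (1 - g1) * g2 by rewrite !mulr_ge0 // subr_ge0.
have h2 : 0 <= (b2 - b) * (1 - g2) * g1 by rewrite !mulr_ge0 // subr_ge0.
have b2_ge0 := le_trans b_ge0 bb2.
have h3 : 0 <= ((b1 - b) + b2 * (1 - b1)) * (1 - g1) * (1 - g2).
  by rewrite !mulr_ge0 ?subr_ge0 // addr_ge0 ?mulr_ge0 ?subr_ge0.
have h4 : b * (g1 * g2) <= b * g by rewrite ler_wpM2l.
(* [(1 - b + b * g1 * g2)] minus the left-hand side is exactly [h1 + h2 + h3]. *)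
nra.
Qed.

Section RealFidelity.
Variable R : rcfType.
Implicit Types a p q : R.

Definition superfid a p q : R := a + Num.sqrt (1 - p) * Num.sqrt (1 - q).

Definition density_traces a p q :=
  [/\ 0 <= a, 0 <= p <= 1, 0 <= q <= 1 & a ^+ 2 <= p * q].

Lemma le_sqrtM_of_sqr (w u v : R) :
  0 <= u -> 0 <= v -> w ^+ 2 <= u * v -> w <= Num.sqrt u * Num.sqrt v.
Proof.
move=> u_ge0 v_ge0 wuv; rewrite -sqrtrM // (le_trans (ler_norm w)) //.
by rewrite -sqrtr_sqr ler_sqrt // mulr_ge0.
Qed.

Lemma one_subM_sum_sqr (p1 p2 : R) : 0 <= p1 <= 1 -> 0 <= p2 <= 1 ->
  1 - p1 * p2 = (Num.sqrt p1 * Num.sqrt (1 - p2)) ^+ 2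
    + (Num.sqrt (1 - p1) * Num.sqrt p2) ^+ 2
    + (Num.sqrt (1 - p1) * Num.sqrt (1 - p2)) ^+ 2.
Proof.
move=> /andP[p1_ge0 p1_le1] /andP[p2_ge0 p2_le1].
rewrite !exprMn !sqr_sqrtr ?subr_ge0 //; ring.
Qed.

Lemma density_tracesM a1 p1 q1 a2 p2 q2 :
  density_traces a1 p1 q1 -> density_traces a2 p2 q2 ->
  density_traces (a1 * a2) (p1 * p2) (q1 * q2).
Proof.
move=> [a1_ge0 /andP[? ?] /andP[? ?] ?] [a2_ge0 /andP[? ?] /andP[? ?] ?].
split; rewrite ?mulr_ge0 //; try (apply/andP; split; nra).
by rewrite exprMn; nra.
Qed.

Lemma density_traces_le_sqrt a p q :
  density_traces a p q -> a <= Num.sqrt p * Num.sqrt q.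
Proof.
by case=> _ /andP[p_ge0 _] /andP[q_ge0 _] apq; apply: le_sqrtM_of_sqr.
Qed.

Lemma superfid_ge0 a p q : density_traces a p q -> 0 <= superfid a p q.
Proof. by case=> a_ge0 _ _ _; rewrite addr_ge0 ?mulr_ge0 ?sqrtr_ge0. Qed.

Lemma superfid_le1 a p q : density_traces a p q -> superfid a p q <= 1.
Proof.
move=> t; have a_le := density_traces_le_sqrt t.
case: t => _ /andP[p_ge0 p_le1] /andP[q_ge0 q_le1] _.
have := sqr_ge0 (Num.sqrt p - Num.sqrt q).
have := sqr_ge0 (Num.sqrt (1 - p) - Num.sqrt (1 - q)).
rewrite !sqrrB !sqr_sqrtr ?subr_ge0 // /superfid; lra.
Qed.

Lemma superfidM a1 p1 q1 a2 p2 q2 :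
  density_traces a1 p1 q1 -> density_traces a2 p2 q2 ->
  superfid a1 p1 q1 * superfid a2 p2 q2
    <= superfid (a1 * a2) (p1 * p2) (q1 * q2).
Proof.
move=> t1 t2; case: (t1) (t2) => _ p1_01 q1_01 _ [_ p2_01 q2_01 _].
rewrite /superfid (one_subM_sum_sqr p1_01 p2_01) (one_subM_sum_sqr q1_01 q2_01).
set x1 := Num.sqrt p1; set x2 := Num.sqrt p2; set y1 := Num.sqrt q1.
set y2 := Num.sqrt q2; set x1' := Num.sqrt (1 - p1).
set x2' := Num.sqrt (1 - p2); set y1' := Num.sqrt (1 - q1).
set y2' := Num.sqrt (1 - q2).
have a1_le : a1 <= x1 * y1 := density_traces_le_sqrt t1.
have a2_le : a2 <= x2 * y2 := density_traces_le_sqrt t2.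
have sum3_ge0 (u v w : R) : 0 <= u ^+ 2 + v ^+ 2 + w ^+ 2.
  by rewrite !addr_ge0 ?sqr_ge0.
have := le_sqrtM_of_sqr (sum3_ge0 _ _ _) (sum3_ge0 _ _ _)
  (cauchy_schwarz3 (x1 * x2') (x1' * x2) (x1' * x2') (y1 * y2') (y1' * y2) (y1' * y2')).
have s1 : 0 <= x1' * y1' := mulr_ge0 (sqrtr_ge0 _) (sqrtr_ge0 _).
have s2 : 0 <= x2' * y2' := mulr_ge0 (sqrtr_ge0 _) (sqrtr_ge0 _).
have := ler_wpM2r s2 a1_le; have := ler_wpM2r s1 a2_le.
lra.
Qed.

Definition fid_weight (d : nat) : R := (1 + (d.-1)%:R^-1) / 2.

Definition fidR d a p q : R := (1 - fid_weight d) + fid_weight d * superfid a p q.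

Lemma fid_weight_ge0 d : 0 <= fid_weight d.
Proof. by rewrite divr_ge0 ?addr_ge0 ?invr_ge0. Qed.

Lemma fid_weight_le1 d : (2 <= d)%N -> fid_weight d <= 1.
Proof.
move=> d_ge2; have : (d.-1)%:R^-1 <= 1 :> R.
  by rewrite invf_le1 ?ler1n ?ltr0n -ltnS prednK // ltnW.
rewrite /fid_weight; lra.
Qed.

Lemma fid_weightM_le d1 d2 : (2 <= d1)%N -> (0 < d2)%N ->
  fid_weight (d1 * d2) <= fid_weight d1.
Proof.
move=> d1_ge2 d2_gt0; have d1_gt1 : (0 < d1.-1)%N by rewrite -ltnS prednK // ltnW.
have le_pred : (d1.-1 <= (d1 * d2).-1)%N by rewrite -!subn1 leq_sub2r ?leq_pmulr.
rewrite /fid_weight ler_pM2r ?invr_gt0 ?ltr0n // lerD2l lef_pV2 ?posrE ?ltr0n ?ler_nat //.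
exact: leq_trans le_pred.
Qed.

Lemma fidRM d1 d2 a1 p1 q1 a2 p2 q2 : (2 <= d1)%N -> (2 <= d2)%N ->
  density_traces a1 p1 q1 -> density_traces a2 p2 q2 ->
  fidR d1 a1 p1 q1 * fidR d2 a2 p2 q2
    <= fidR (d1 * d2) (a1 * a2) (p1 * p2) (q1 * q2).
Proof.
move=> d1_ge2 d2_ge2 t1 t2; apply: mul_affine_le.
- exact: fid_weight_ge0.
- by rewrite fid_weightM_le // ltnW.
- by rewrite mulnC fid_weightM_le // ltnW.
- exact: fid_weight_le1.
- exact: fid_weight_le1.
- by rewrite superfid_ge0 ?superfid_le1.
- by rewrite superfid_ge0 ?superfid_le1.
- exact: superfidM.
Qed.
End RealFidelity.

Lemma mxtrace_tensmx (R : comPzRingType) m n (A : 'M[R]_m) (B : 'M[R]_n) :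
  \tr (tensmx A B) = \tr A * \tr B.
Proof. by rewrite /mxtrace mulr_sum; apply: eq_bigr => k _; rewrite !mxE. Qed.

Lemma mxtrace_tensmx_mul (R : comPzRingType) m n (A1 B1 : 'M[R]_m) (A2 B2 : 'M[R]_n) :
  \tr (tensmx A1 A2 *m tensmx B1 B2) = \tr (A1 *m B1) * \tr (A2 *m B2).
Proof. by rewrite tensmx_mul mxtrace_tensmx. Qed.

Section TraceInequalities.
Variable C : numClosedFieldType.

Lemma adjmxE m n (A : 'M[C]_(m, n)) : adjmx A = (A ^t* )%sesqui.
Proof. by []. Qed.

Lemma psd_conj_diag_ge0 k n (A : 'M[C]_n) (M : 'M[C]_(k, n)) i :
  psd A -> 0 <= (M *m A *m adjmx M) i i.
Proof.
case=> _ /(_ (adjmx (row i M))); rewrite !adjmxE trmxCK; congr (0 <= _).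
rewrite !mxE; apply: eq_bigr => j _; rewrite !mxE; congr (_ * _).
by apply: eq_bigr => l _; rewrite !mxE.
Qed.

Lemma herm_mxtrace_sqr_ge0 n (H : 'M[C]_n) : adjmx H = H -> 0 <= \tr (H *m H).
Proof.
move=> H_herm; rewrite -{2}H_herm; apply: sumr_ge0 => i _; rewrite !mxE.
by apply: sumr_ge0 => j _; rewrite !mxE mul_conjC_ge0.
Qed.

Lemma psd_mxtrace_mul_le n (A B : 'M[C]_n) : psd A -> psd B ->
  0 <= \tr (A *m B) <= \tr A * \tr B.
Proof.
(* Diagonalise B = P^* D P: then tr(A B) = sum_k (P A P^* )_kk D_k, a sum of
   products of nonnegative numbers, each D_k being at most tr B. *)
move=> A_psd B_psd; have [B_herm _] := B_psd.
have /orthomx_spectralP B_spec : B \is normalmx.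
  by apply/normalmxP; rewrite -adjmxE B_herm.
set P := spectralmx B in B_spec; set D := spectral_diag B in B_spec.
have P_unitary : P \is unitarymx := spectral_unitarymx B.
rewrite invmx_unitary // -adjmxE in B_spec.
have PPt : P *m adjmx P = 1%:M by apply/unitarymxP.
have PtP : adjmx P *m P = 1%:M by rewrite adjmxE -[LHS]mul1mx mulmxA mulmxKtV.
have tr_conj X : \tr (P *m X *m adjmx P) = \tr X.
  by rewrite mxtrace_mulC mulmxA PtP mul1mx.
set c := fun k => (P *m A *m adjmx P) k k.
have c_ge0 k : 0 <= c k by apply: psd_conj_diag_ge0.
have D_ge0 k : 0 <= D 0 k.
  have := psd_conj_diag_ge0 P k B_psd.
  by rewrite B_spec !mulmxA PPt mul1mx -mulmxA PPt mulmx1 mxE eqxx mulr1n.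
have trAB : \tr (A *m B) = \sum_k c k * D 0 k.
  rewrite B_spec mulmxA mxtrace_mulC !mulmxA.
  by apply: eq_bigr => k _; rewrite mul_mx_diag mxE.
have trA : \tr A = \sum_k c k by rewrite -(tr_conj A).
have trB : \tr B = \sum_k D 0 k.
  rewrite B_spec mxtrace_mulC mulmxA PPt mul1mx.
  by apply: eq_bigr => k _; rewrite mxE eqxx mulr1n.
rewrite trAB sumr_ge0 => [|k _]; last by rewrite mulr_ge0.
rewrite trA trB mulr_suml ler_sum // => k _; rewrite ler_wpM2l //.
by rewrite (bigD1 k) //= lerDl sumr_ge0.
Qed.

Lemma mxtrace_comb_sqr_ge0 n (x y : C) (A B : 'M[C]_n) :
  Num.conj x = x -> Num.conj y = y -> adjmx A = A -> adjmx B = B ->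
  0 <= x ^+ 2 * \tr (A *m A) + 2 * x * y * \tr (A *m B) + y ^+ 2 * \tr (B *m B).
Proof.
move=> x_real y_real A_herm B_herm.
have -> : x ^+ 2 * \tr (A *m A) + 2 * x * y * \tr (A *m B) + y ^+ 2 * \tr (B *m B)
    = \tr ((x *: A + y *: B) *m (x *: A + y *: B)).
  rewrite mulmxDl !mulmxDr -!scalemxAl -!scalemxAr !mxtraceD !mxtraceZ.
  by rewrite (mxtrace_mulC B A) /GRing.scale /=; ring.
apply: herm_mxtrace_sqr_ge0; rewrite -{2}A_herm -{2}B_herm.
by apply/matrixP => i j; rewrite !mxE rmorphD !rmorphM /= x_real y_real.
Qed.

End TraceInequalities.

Local Open Scope complex_scope.

Section ComplexTraces.
Variable R : rcfType.

Lemma exists_density_traces n (rho sigma : 'M[R[i]]_n) :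
  density rho -> density sigma ->
  exists a p q : R, [/\ \tr (rho *m sigma) = a%:C, \tr (rho *m rho) = p%:C,
    \tr (sigma *m sigma) = q%:C & density_traces a p q].
Proof.
move=> [rho_psd tr_rho] [sigma_psd tr_sigma].
have [rho_herm _] := rho_psd; have [sigma_herm _] := sigma_psd.
have /andP[a_ge0 _] := psd_mxtrace_mul_le rho_psd sigma_psd.
have /andP[p_ge0 p_le1] := psd_mxtrace_mul_le rho_psd rho_psd.
have /andP[q_ge0 q_le1] := psd_mxtrace_mul_le sigma_psd sigma_psd.
rewrite tr_rho tr_sigma !mulr1 in p_le1 q_le1.
have Re_le (z w : R[i]) : z <= w -> complex.Re z <= complex.Re w.
  by rewrite lecE => /andP[].
have real_ge0 (z : R[i]) : 0 <= z -> z = (complex.Re z)%:C.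
  by move/ger0_real/RRe_real.
exists (complex.Re (\tr (rho *m sigma))), (complex.Re (\tr (rho *m rho))),
  (complex.Re (\tr (sigma *m sigma))).
rewrite -!real_ge0 //; split => //; split.
- exact: Re_le a_ge0.
- by apply/andP; split; [exact: Re_le p_ge0 | exact: Re_le p_le1].
- by apply/andP; split; [exact: Re_le q_ge0 | exact: Re_le q_le1].
apply: discriminant_le => x y; rewrite -ler0c.
have := mxtrace_comb_sqr_ge0 (conjc_real x) (conjc_real y) rho_herm sigma_herm.
rewrite (real_ge0 _ a_ge0) (real_ge0 _ p_ge0) (real_ge0 _ q_ge0).
by rewrite !(rmorphD, rmorphM, rmorphXn, rmorph_nat).
Qed.

Lemma fidC_complex d (rho sigma : 'M[R[i]]_d) (a p q : R) :
  \tr (rho *m sigma) = a%:C -> \tr (rho *m rho) = p%:C ->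
  \tr (sigma *m sigma) = q%:C -> density_traces a p q ->
  fidC rho sigma = (fidR d a p q)%:C.
Proof.
move=> tr_rs tr_rr tr_ss [_ /andP[_ p_le1] /andP[_ q_le1] _].
have sqrtC_1B (x : R) : x <= 1 -> sqrtC (1 - x%:C) = (Num.sqrt (1 - x))%:C.
  move=> x_le1; have -> : 1 - x%:C = (Num.sqrt (1 - x))%:C ^+ 2.
    by rewrite -rmorphXn sqr_sqrtr ?subr_ge0 // rmorphB rmorph1.
  by rewrite sqrCK // ler0c sqrtr_ge0.
rewrite /fidC tr_rs tr_rr tr_ss !sqrtC_1B // /fidR /superfid /fid_weight.
rewrite !(rmorphD, rmorphN, rmorphM, rmorph1, fmorphV, rmorph_nat).
by set r := ((d.-1)%:R : R[i])^-1; congr (_ + _); field.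
Qed.
End ComplexTraces.

Theorem theorem5 (R : rcfType) (d1 d2 : nat) (hd1 : (2 <= d1)%N) (hd2 : (2 <= d2)%N)
  (rho1 sigma1 : 'M[R[i]]_d1) (rho2 sigma2 : 'M[R[i]]_d2) :
  density rho1 -> density sigma1 -> density rho2 -> density sigma2 ->
  fidC rho1 sigma1 * fidC rho2 sigma2
    <= fidC (tensmx rho1 rho2) (tensmx sigma1 sigma2).
Proof.
move=> rho1_dens sigma1_dens rho2_dens sigma2_dens.
have [a1 [p1 [q1 [tr_rs1 tr_rr1 tr_ss1 t1]]]] :=
  exists_density_traces rho1_dens sigma1_dens.
have [a2 [p2 [q2 [tr_rs2 tr_rr2 tr_ss2 t2]]]] :=
  exists_density_traces rho2_dens sigma2_dens.
have F12 : fidC (tensmx rho1 rho2) (tensmx sigma1 sigma2)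
    = (fidR (d1 * d2) (a1 * a2) (p1 * p2) (q1 * q2))%:C.
  by apply: fidC_complex (density_tracesM t1 t2);
    rewrite mxtrace_tensmx_mul ?tr_rs1 ?tr_rr1 ?tr_ss1 ?tr_rs2 ?tr_rr2 ?tr_ss2 rmorphM.
rewrite (fidC_complex tr_rs1 tr_rr1 tr_ss1 t1) (fidC_complex tr_rs2 tr_rr2 tr_ss2 t2).
by rewrite F12 -rmorphM lecR fidRM.
Qed.
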